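(* Consider the decentralized Thompson Sampling algorithm for Bernoulli rewards described in the context, with any learning rate $\eta>0$. Let $k\in\{2,\dots,K\}$ and fix thresholds $\mu_k<x_k<y_k<\mu_1$. Then for every $T\ge1$, \[ \sum_{i=1}^N\mathbb E\left[\sum_{t=1}^T\mathbf 1\{A^{(i)}_t=k,\ E^{(i)}_k(t),\ \widetilde E^{(i)}_k(t)\}\right]\le\sum_{i=1}^N\mathbb E\left[\sum_{t=1}^T\left(\frac1{G^{(i)}_{1,t}}-1\right)\mathbf 1\{A^{(i)}_t=1\}\right]. \]
   Context: $N$ agents on a connected undirected graph; $W\in\mathbb R^{N\times N}$ doubly stochastic with nonnegative entries, $W_{ij}>0$ for $i\ne j$ iff $\{i,j\}$ is an edge. $K$ arms with Bernoulli rewards of means $\mu_1>\mu_2\ge\cdots\ge\mu_K$, independent across agents, rounds, arms. Decentralized Thompson Sampling with learning rate $\eta$ and prior $\mathrm{Beta}(1,1)$: agent $i$ maintains $\alpha^{(i)}_k(t),\beta^{(i)}_k(t)$ with $\alpha^{(i)}_k(1)=\beta^{(i)}_k(1)=1$; its posterior for arm $k$ at round $t$ is $Q^{(i)}_{k,t}=\mathrm{Beta}(\alpha^{(i)}_k(t),\beta^{(i)}_k(t))$. In round $t$, agent $i$ draws $\theta^{(i)}_k(t)\sim Q^{(i)}_{k,t}$ independently over $k$, plays $A^{(i)}_t\in\arg\max_k\theta^{(i)}_k(t)$, observes reward $Y^{(i)}_t$, sets $\tilde\alpha^{(i)}_k=\alpha^{(i)}_k(t)+\eta Y^{(i)}_t\mathbf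 1\{A^{(i)}_t=k\}$, $\tilde\beta^{(i)}_k=\beta^{(i)}_k(t)+\eta(1-Y^{(i)}_t)\mathbf 1\{A^{(i)}_t=k\}$, and then $\alpha^{(i)}_k(t+1)=\sum_j W_{ij}\tilde\alpha^{(j)}_k$, $\beta^{(i)}_k(t+1)=\sum_j W_{ij}\tilde\beta^{(j)}_k$. Notation: $\hat\mu^{(i)}_k(t)=\frac{\alpha^{(i)}_k(t)-1}{\alpha^{(i)}_k(t)+\beta^{(i)}_k(t)-2}$, $E^{(i)}_k(t)=\{\hat\mu^{(i)}_k(t)\le x_k\}$, $\widetilde E^{(i)}_k(t)=\{\theta^{(i)}_k(t)\le y_k\}$. $G^{(i)}_{1,t}=Q^{(i)}_{1,t}\big((y_k,1]\big)$, i.e. the probability that a $\mathrm{Beta}(\alpha^{(i)}_1(t),\beta^{(i)}_1(t))$ random variable exceeds $y_k$. *)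

From mathcomp Require Import all_boot all_order all_algebra.
From mathcomp Require Import all_classical all_reals all_analysis.
Set Implicit Arguments. Unset Strict Implicit. Unset Printing Implicit Defensive.
Import Order.TTheory GRing.Theory Num.Theory.
Local Open Scope classical_set_scope.
Local Open Scope ring_scope.

Definition beta_kernel {R : realType} (a b x : R) : R :=
  x `^ (a - 1) * (1 - x) `^ (b - 1).

Definition beta_fun {R : realType} (a b : R) : R :=
  Rintegral lebesgue_measure `[0%R, 1%R] (beta_kernel a b).

Definition beta_pdf {R : realType} (a b x : R) : R :=
  beta_kernel a b x / beta_fun a b.

Definition beta_prob {R : realType} (a b : R) (A : set R) : R :=
  Rintegral lebesgue_measure (A `&` `[0%R, 1%R]) (beta_pdf a b).

Section DTS.
Variables (R : realType) (N K : nat).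
(* agents are 'I_N; arms are 'I_K.+1 (paper's arm 1 is ord0, the paper's
   number of arms is K.+1) *)
Notation agent := 'I_N.
Notation arm := 'I_K.+1.

Record state := State { alpha_ : agent -> arm -> R; beta_ : agent -> arm -> R }.

Definition init_state : state := State (fun _ _ => 1) (fun _ _ => 1).

(* record of one round t: state (alpha(t), beta(t)) at the start of the round,
   samples theta^{(i)}_k(t), actions A^{(i)}_t and rewards Y^{(i)}_t *)
Record round := Round {
  r_state : state;
  r_theta : agent -> arm -> R;
  r_act : agent -> arm;
  r_rew : {ffun agent -> bool} }.

(* A^{(i)}_t in argmax_k theta^{(i)}_k(t) (ties broken by a fixed rule) *)
Definition choose (th : agent -> arm -> R) : agent -> arm :=
  fun i => [arg max_(k > ord0) th i k]%O.

(* learning-rate update followed by the gossip step with W *)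
Definition update (W : 'M[R]_N) (eta : R) (s : state) (A : agent -> arm)
  (Y : {ffun agent -> bool}) : state :=
  State
   (fun i k => \sum_j W i j * (alpha_ s j k + eta * (Y j)%:R * (A j == k)%:R))
   (fun i k => \sum_j W i j * (beta_ s j k + eta * (1 - (Y j)%:R) * (A j == k)%:R)).

(* Integral of F(theta) where the coordinates (i,k) in s are drawn
   independently, theta_{i,k} ~ Beta(alpha_i_k, beta_i_k). *)
Fixpoint draw (s : seq (agent * arm)) (st : state)
  (F : (agent -> arm -> R) -> R) (th : agent -> arm -> R) : R :=
  match s with
  | [::] => F th
  | p :: s' =>
      Rintegral lebesgue_measure `[0%R, 1%R]
        (fun x => beta_pdf (alpha_ st p.1 p.2) (beta_ st p.1 p.2) x *
           draw s' st F (fun i k => if (i, k) == p then x else th i k))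
  end.

Definition draw_all (st : state) (F : (agent -> arm -> R) -> R) : R :=
  draw (enum {: agent * arm}) st F (fun _ _ => 0).

(* probability of the reward vector Y given the actions A (independent
   Bernoulli(mu_{A_i}) rewards across agents) *)
Definition rew_prob (mu : arm -> R) (A : agent -> arm) (Y : {ffun agent -> bool}) : R :=
  \prod_i (if Y i then mu (A i) else 1 - mu (A i)).

(* pathE T st F = E[F(rounds 1..T)] when the algorithm is run for T rounds
   starting from state st (the list of rounds is in chronological order). *)
Fixpoint pathE (W : 'M[R]_N) (eta : R) (mu : arm -> R) (T : nat) (st : state)
  (F : seq round -> R) : R :=
  match T with
  | 0 => F [::]
  | T'.+1 =>
      draw_all st (fun th =>
        let A := choose th in
        \sum_(Y : {ffun agent -> bool})
          rew_prob mu A Y *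
          pathE W eta mu T' (update W eta st A Y)
                (fun rest => F (Round st th A Y :: rest)))
  end.

Definition muhat (st : state) (i : agent) (k : arm) : R :=
  (alpha_ st i k - 1) / (alpha_ st i k + beta_ st i k - 2).

Definition G1 (st : state) (i : agent) (y : R) : R :=
  beta_prob (alpha_ st i ord0) (beta_ st i ord0) `]y, 1%R].

End DTS.

Definition gossip_matrix {R : realType} {N : nat} (e : rel 'I_N) (W : 'M[R]_N) : Prop :=
  [/\ symmetric e, irreflexive e & (forall i j, connect e i j)] /\
  [/\ (forall i j, 0 <= W i j),
      (forall i, \sum_j W i j = 1), (forall j, \sum_i W i j = 1)
    & (forall i j, i != j -> (0 < W i j <-> e i j))].

From Pilot Require Import Defs.
From mathcomp Require Import all_boot all_order all_algebra.
From mathcomp Require Import all_classical all_reals all_analysis.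
From mathcomp Require Import lra measurable_realfun.
Set Implicit Arguments. Unset Strict Implicit. Unset Printing Implicit Defensive.
Import Order.TTheory GRing.Theory Num.Theory.
Local Open Scope classical_set_scope.
Local Open Scope ring_scope.

(* Fix a round and the current posteriors.  If agent i plays arm k with a sample
   theta_k <= y, then, arm k being the argmax, all samples of agent i are <= y.
   The samples are independent given the posteriors, so this has probability at
   most (1 - G) P(M), where G = P(theta_1 > y) and M is the event that every
   sample other than theta_1 is <= y.  Conversely theta_1 > y together with M
   forces arm 1 to be played, so P(A = 1) >= G P(M).  Hence the expected
   left-hand weight of the round is at most (1/G - 1) P(A = 1).  Summing over
   agents and unrolling the expectation over the rounds by induction on T gives
   the theorem; the posterior parameters stay >= 1, which keeps every Beta
   density bounded and every integrand integrable. *)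

Section BetaExpectation.
Variable R : realType.
Notation lambda := (@lebesgue_measure R).

Lemma integrable01_bounded (h : R -> R) (c : R) : measurable_fun setT h ->
  (forall z, 0 <= z <= 1 -> `|h z| <= c) -> lambda.-integrable `[0%R, 1%R] (EFin \o h).
Proof.
move=> mh hc; apply: measurable_bounded_integrable => //.
- have := lebesgue_measure_itv `[0%R, 1%R]; rewrite /= => ->.
  by rewrite lte_fin ltr01 oppr0 adde0 ltry.
- exact: measurable_funS mh.
- exists c; split; first exact: num_real.
  by move=> M cM z; rewrite /= in_itv/= => /hc/le_trans; apply; exact: ltW.
Qed.

Lemma Rintegral01_gt0 (h : R -> R) (c m u v : R) : measurable_fun setT h ->
  (forall z, 0 <= z <= 1 -> 0 <= h z <= c) ->
  0 < m -> 0 <= u < v -> v <= 1 -> (forall z, u <= z <= v -> m <= h z) ->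
  0 < Rintegral lambda `[0%R, 1%R] h.
Proof.
move=> mh hb m0 /andP[u0 uv] v1 hm.
have uv01 : [set` `[u, v]] `&` [set` `[0%R, 1%R]] = [set` `[u, v]].
  by apply/setIidPl => z /=; rewrite !in_itv /= => /andP[uz zv]; apply/andP; lra.
have int_ind : lambda.-integrable `[0%R, 1%R] (EFin \o \1_(`[u, v] : set R)).
  apply: (@integrable01_bounded _ 1); first exact: measurable_indic.
  by move=> z _; rewrite indicE; case: (_ \in _); rewrite ?normr1 ?normr0.
have inth : lambda.-integrable `[0%R, 1%R] (EFin \o h).
  by apply: (@integrable01_bounded _ c) => // z /hb/andP[h0 hc]; rewrite ger0_norm.
apply: (@lt_le_trans _ _ (Rintegral lambda `[0%R, 1%R] (fun z => m * \1_(`[u, v] : set R) z))).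
  rewrite RintegralZl // /Rintegral integral_indic // uv01.
  have := lebesgue_measure_itv `[u, v]; rewrite /= lte_fin uv => ->.
  by rewrite -EFinD /= mulr_gt0 // subr_gt0.
apply: le_Rintegral => //.
  rewrite (_ : EFin \o _ = fun z => (m%:E * (EFin \o \1_(`[u, v] : set R)) z)%E).
    exact: integrableZl.
  by apply/funext => z; rewrite /= EFinM.
move=> z; rewrite /= in_itv /= => z01; rewrite indicE.
case: (boolP (_ \in _)) => zI; first by rewrite mulr1 hm //; move: zI; rewrite inE /= in_itv.
by rewrite mulr0; case/andP: (hb z z01).
Qed.

Lemma beta_kernel_ge0 (a b z : R) : 0 <= beta_kernel a b z.
Proof. by rewrite mulr_ge0 // powR_ge0. Qed.

Lemma measurable_beta_kernel (a b : R) : measurable_fun setT (beta_kernel a b).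
Proof.
apply: measurable_funM; first exact: measurable_powR.
rewrite (_ : (fun x => _) = (@powR R ^~ (b - 1)) \o (fun x : R => 1 - x))//.
by apply: measurableT_comp; [exact: measurable_powR | exact: measurable_funB].
Qed.

Definition bounded01 (h : R -> R) := exists c, forall z, 0 <= z <= 1 -> `|h z| <= c.

Lemma bounded01_nat (P : R -> bool) : bounded01 (fun z => (P z)%:R).
Proof. by exists 1 => z _; case: (P z); rewrite ?normr1 ?normr0. Qed.

Lemma measurable_ler_nat (y : R) : measurable_fun setT (fun z : R => (z <= y)%R%:R : R).
Proof.
rewrite (_ : (fun z => _) = \1_[set z : R | z <= y]).
  by apply: measurable_indic; rewrite -[X in measurable X]setTI; exact: measurable_fun_le.
apply/funext => z; rewrite indicE.
by have [zy|zy] := boolP (z <= y); [rewrite mem_set | rewrite memNset //= (negbTE zy)].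
Qed.

Lemma measurable_ltr_nat (y : R) : measurable_fun setT (fun z : R => (y < z)%R%:R : R).
Proof.
rewrite (_ : (fun z => _) = (fun z => 1 - (z <= y)%R%:R)).
  by apply: measurable_funB; [exact: measurable_cst | exact: measurable_ler_nat].
by apply/funext => z; rewrite ltNge; case: (z <= y); rewrite ?subrr ?subr0.
Qed.

Variables a b : R.
Hypotheses (a1 : 1 <= a) (b1 : 1 <= b).

Lemma beta_kernel_le1 (z : R) : 0 <= z <= 1 -> beta_kernel a b z <= 1.
Proof.
have powR_le1 (w p : R) : 0 <= p -> 0 <= w -> w <= 1 -> w `^ p <= 1.
  move=> p0 w0 w1; rewrite -[leRHS](congr1 (@^~ p) (powR1 R)).
  by apply: ge0_ler_powR; rewrite ?nnegrE.
move=> /andP[z0 z1].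
by rewrite mulr_ile1 ?powR_ge0 //; apply: powR_le1; rewrite ?subr_ge0 ?gerBl.
Qed.

Lemma beta_kernel_ge (u v z : R) : 0 < u -> u <= z <= v -> v < 1 ->
  u `^ (a - 1) * (1 - v) `^ (b - 1) <= beta_kernel a b z.
Proof.
move=> u0 /andP[uz zv] v1.
apply: ler_pM; rewrite ?powR_ge0 //; apply: ge0_ler_powR;
  by rewrite ?nnegrE ?subr_ge0 ?lerD2l ?lerN2 //; lra.
Qed.

Lemma beta_fun_gt0 : 0 < Defs.beta_fun a b.
Proof.
apply: (@Rintegral01_gt0 _ 1 ((1/3) `^ (a - 1) * (1 - 2/3) `^ (b - 1)) (1/3) (2/3)).
- exact: measurable_beta_kernel.
- by move=> z z01; rewrite beta_kernel_ge0 beta_kernel_le1.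
- by rewrite mulr_gt0 // powR_gt0 //; lra.
- apply/andP; lra.
- lra.
- by move=> z zz; apply: beta_kernel_ge => //; lra.
Qed.

Lemma beta_pdf_ge0 (z : R) : 0 <= Defs.beta_pdf a b z.
Proof. by rewrite divr_ge0 ?beta_kernel_ge0 // ltW // beta_fun_gt0. Qed.

Lemma beta_pdf_le (z : R) : 0 <= z <= 1 -> Defs.beta_pdf a b z <= (Defs.beta_fun a b)^-1.
Proof.
move=> z01; rewrite ler_pdivrMr ?beta_fun_gt0 //.
by rewrite mulVf ?beta_kernel_le1 // gt_eqF // beta_fun_gt0.
Qed.

Lemma measurable_beta_pdf : measurable_fun setT (Defs.beta_pdf a b).
Proof. by apply: measurable_funM; [exact: measurable_beta_kernel | exact: measurable_cst]. Qed.

Definition beta_expect (h : R -> R) : R :=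
  Rintegral lambda `[0%R, 1%R] (fun z => Defs.beta_pdf a b z * h z).

Lemma integrable_beta_expect (h : R -> R) : measurable_fun setT h -> bounded01 h ->
  lambda.-integrable `[0%R, 1%R] (EFin \o (fun z => Defs.beta_pdf a b z * h z)).
Proof.
move=> mh [c hc]; apply: (@integrable01_bounded _ ((Defs.beta_fun a b)^-1 * c)).
  exact: measurable_funM measurable_beta_pdf mh.
move=> z z01; rewrite normrM ger0_norm ?beta_pdf_ge0 //.
by apply: ler_pM; rewrite ?beta_pdf_ge0 ?beta_pdf_le ?hc.
Qed.

Lemma beta_expect_cst (c : R) : beta_expect (fun _ => c) = c.
Proof.
rewrite /beta_expect RintegralZr //; last first.
  apply: (@integrable01_bounded _ (Defs.beta_fun a b)^-1); first exact: measurable_beta_pdf.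
  by move=> z z01; rewrite ger0_norm ?beta_pdf_ge0 ?beta_pdf_le.
rewrite /Defs.beta_pdf RintegralZr //; last first.
  apply: (@integrable01_bounded _ 1); first exact: measurable_beta_kernel.
  by move=> z z01; rewrite ger0_norm ?beta_kernel_ge0 ?beta_kernel_le1.
by rewrite -/(Defs.beta_fun a b) mulfV ?mul1r // gt_eqF // beta_fun_gt0.
Qed.

Section Linearity.
Variables (h1 h2 : R -> R).
Hypotheses (mh1 : measurable_fun setT h1) (bh1 : bounded01 h1).
Hypotheses (mh2 : measurable_fun setT h2) (bh2 : bounded01 h2).

Lemma beta_expectD : beta_expect (fun z => h1 z + h2 z) = beta_expect h1 + beta_expect h2.
Proof.
rewrite /beta_expect -RintegralD //; try exact: integrable_beta_expect.
by apply: eq_Rintegral => z _; rewrite mulrDr.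
Qed.

Lemma ler_beta_expect : (forall z, 0 <= z <= 1 -> h1 z <= h2 z) ->
  beta_expect h1 <= beta_expect h2.
Proof.
move=> h12; apply: le_Rintegral => //; try exact: integrable_beta_expect.
by move=> z; rewrite /= in_itv /= => z01; rewrite ler_wpM2l ?beta_pdf_ge0 ?h12.
Qed.

End Linearity.

Lemma beta_expectZ (c : R) (h : R -> R) : measurable_fun setT h -> bounded01 h ->
  beta_expect (fun z => c * h z) = c * beta_expect h.
Proof.
move=> mh bh; rewrite /beta_expect -RintegralZl //; last exact: integrable_beta_expect.
by apply: eq_Rintegral => z _; rewrite mulrCA.
Qed.

Lemma beta_expect_ge0 (h : R -> R) : (forall z, 0 <= z <= 1 -> 0 <= h z) ->
  0 <= beta_expect h.
Proof.
move=> h0; apply: Rintegral_ge0 => z; rewrite /= in_itv /= => z01.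
by rewrite mulr_ge0 ?beta_pdf_ge0 ?h0.
Qed.

Lemma beta_prob_itv_gt (y : R) :
  Defs.beta_prob a b `]y, 1%R] = beta_expect (fun z => (y < z)%R%:R).
Proof.
rewrite /Defs.beta_prob Rintegral_mkcondl; apply: eq_Rintegral => z.
rewrite inE /= in_itv /= => /andP[_ z1]; rewrite /patch.
have [yz|yz] := boolP (y < z); first by rewrite mem_set /= ?in_itv /= ?yz ?z1 // mulr1.
by rewrite memNset ?mulr0 //= in_itv /= (negbTE yz).
Qed.

Lemma beta_expect_ler_nat (y : R) :
  beta_expect (fun z => (z <= y)%R%:R) = 1 - Defs.beta_prob a b `]y, 1%R].
Proof.
rewrite beta_prob_itv_gt -[X in X - _](beta_expect_cst 1).
rewrite (_ : (fun _ => 1) = fun z => (z <= y)%R%:R + (y < z)%R%:R); last first.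
  by apply/funext => z; rewrite ltNge; case: (z <= y); rewrite /= ?addr0 ?add0r.
rewrite beta_expectD ?addrK //.
- exact: measurable_ler_nat.
- exact: bounded01_nat.
- exact: measurable_ltr_nat.
- exact: bounded01_nat.
Qed.

Lemma beta_prob_itv_gt_le1 (y : R) : Defs.beta_prob a b `]y, 1%R] <= 1.
Proof.
rewrite -subr_ge0 -beta_expect_ler_nat; apply: beta_expect_ge0 => z _.
exact: ler0n.
Qed.

Lemma beta_prob_itv_gt_gt0 (y : R) : 0 <= y < 1 -> 0 < Defs.beta_prob a b `]y, 1%R].
Proof.
move=> /andP[y0 y1]; set u := (2 * y + 1) / 3; set v := (y + 2) / 3.
have [u0 yu uv v1] : [/\ 0 < u, y < u, u < v & v < 1] by split; rewrite /u /v; lra.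
rewrite beta_prob_itv_gt.
apply: (@Rintegral01_gt0 _ (Defs.beta_fun a b)^-1
  (u `^ (a - 1) * (1 - v) `^ (b - 1) / Defs.beta_fun a b) u v).
- exact: measurable_funM measurable_beta_pdf (measurable_ltr_nat y).
- move=> z z01; rewrite mulr_ge0 ?beta_pdf_ge0 //=.
  by case: (y < z); rewrite ?mulr1 ?beta_pdf_le // mulr0 invr_ge0 ltW // beta_fun_gt0.
- by rewrite divr_gt0 ?beta_fun_gt0 // mulr_gt0 // powR_gt0 // subr_gt0.
- by apply/andP; split; [exact: ltW|].
- exact: ltW.
- move=> z /andP[uz zv]; rewrite (lt_le_trans yu uz) mulr1 ler_wpM2r //.
    by rewrite invr_ge0 ltW // beta_fun_gt0.
  by apply: beta_kernel_ge => //; apply/andP.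
Qed.

End BetaExpectation.

Section ThetaMeasurability.
Variables (R : realType) (N K : nat).
Notation theta := ('I_N -> 'I_K.+1 -> R).

(* Functions of theta are integrated one coordinate at a time, so what is needed
   is measurability when the coordinates depend measurably on a parameter; this
   stands in for measurability with respect to a product sigma-algebra on theta. *)
Definition coordwise_measurable d (X : measurableType d) (phi : X -> theta) :=
  forall i k, measurable_fun setT (fun x => phi x i k).

Definition theta_measurable (F : theta -> R) :=
  forall d (X : measurableType d) (phi : X -> theta),
  coordwise_measurable phi -> measurable_fun setT (F \o phi).

Definition theta_measurable_pred (P : theta -> bool) :=
  forall d (X : measurableType d) (phi : X -> theta),
  coordwise_measurable phi -> measurable [set x | P (phi x)].

Lemma eq_theta_measurable F G : (forall t, F t = G t) ->
  theta_measurable F -> theta_measurable G.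
Proof. by move=> /funext <-. Qed.

Lemma eq_theta_measurable_pred P Q : (forall t, P t = Q t) ->
  theta_measurable_pred P -> theta_measurable_pred Q.
Proof. by move=> /funext <-. Qed.

Lemma theta_measurable_cst c : theta_measurable (fun _ => c).
Proof. by move=> d X phi _; exact: measurable_cst. Qed.

Lemma theta_measurable_proj i k : theta_measurable (fun t => t i k).
Proof. by move=> d X phi cphi; exact: cphi. Qed.

Lemma theta_measurableD F G : theta_measurable F -> theta_measurable G ->
  theta_measurable (fun t => F t + G t).
Proof. by move=> mF mG d X phi cphi; exact: measurable_funD (mF _ _ _ cphi) (mG _ _ _ cphi). Qed.

Lemma theta_measurableM F G : theta_measurable F -> theta_measurable G ->
  theta_measurable (fun t => F t * G t).
Proof. by move=> mF mG d X phi cphi; exact: measurable_funM (mF _ _ _ cphi) (mG _ _ _ cphi). Qed.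

Lemma theta_measurable_sum (J : Type) (s : seq J) (F : J -> theta -> R) :
  (forall j, theta_measurable (F j)) -> theta_measurable (fun t => \sum_(j <- s) F j t).
Proof.
move=> mF; elim: s => [|j s IH].
  by apply: eq_theta_measurable (theta_measurable_cst 0) => t; rewrite big_nil.
by apply: eq_theta_measurable (theta_measurableD (mF j) IH) => t; rewrite big_cons.
Qed.

Lemma theta_measurable_ler F G : theta_measurable F -> theta_measurable G ->
  theta_measurable_pred (fun t => F t <= G t).
Proof.
move=> mF mG d X phi cphi; rewrite -[X in measurable X]setTI.
exact: measurable_fun_le (mF _ _ _ cphi) (mG _ _ _ cphi).
Qed.

Lemma theta_measurable_pred_cst (b : bool) : theta_measurable_pred (fun _ => b).
Proof.
move=> d X phi _; case: b.
  by rewrite (_ : [set _ | true] = setT) //; apply/seteqP; split.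
by rewrite (_ : [set _ | false] = set0) //; apply/seteqP; split.
Qed.

Lemma theta_measurable_predN P : theta_measurable_pred P ->
  theta_measurable_pred (fun t => ~~ P t).
Proof.
move=> mP d X phi cphi; rewrite (_ : [set x | _] = ~` [set x | P (phi x)]).
  exact/measurableC/mP.
by apply/seteqP; split => x /=; case: (P _).
Qed.

Lemma theta_measurable_predI P Q : theta_measurable_pred P -> theta_measurable_pred Q ->
  theta_measurable_pred (fun t => P t && Q t).
Proof.
move=> mP mQ d X phi cphi.
rewrite (_ : [set x | _] = [set x | P (phi x)] `&` [set x | Q (phi x)]).
  exact: measurableI (mP _ _ _ cphi) (mQ _ _ _ cphi).
by apply/seteqP; split => x /=; [move/andP | move=> [-> ->]].
Qed.

Lemma theta_measurable_pred_forall (J : finType) (P : J -> theta -> bool) :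
  (forall j, theta_measurable_pred (P j)) -> theta_measurable_pred (fun t => [forall j, P j t]).
Proof.
move=> mP; apply: (@eq_theta_measurable_pred (fun t => all (P^~ t) (enum J))).
  by move=> t; apply/allP/forallP => H j; [apply: H; rewrite mem_enum | move=> _; exact: H].
elim: (enum J) => [|j s IH] /=; first exact: theta_measurable_pred_cst.
exact: theta_measurable_predI.
Qed.

Lemma theta_measurable_pred_exists (J : finType) (P : J -> theta -> bool) :
  (forall j, theta_measurable_pred (P j)) -> theta_measurable_pred (fun t => [exists j, P j t]).
Proof.
move=> mP; apply: eq_theta_measurable_pred
  (theta_measurable_predN (theta_measurable_pred_forall (fun j => theta_measurable_predN (mP j)))).
by move=> t; rewrite negb_forall; apply: eq_existsb => j; rewrite negbK.
Qed.

Lemma theta_measurable_ltr F G : theta_measurable F -> theta_measurable G ->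
  theta_measurable_pred (fun t => F t < G t).
Proof.
move=> mF mG; apply: eq_theta_measurable_pred (theta_measurable_predN (theta_measurable_ler mG mF)).
by move=> t; rewrite ltNge.
Qed.

Lemma theta_measurable_nat P : theta_measurable_pred P ->
  theta_measurable (fun t => (P t)%:R).
Proof.
move=> mP d X phi cphi; rewrite (_ : _ \o _ = \1_[set x | P (phi x)]).
  exact/measurable_indic/mP.
apply/funext => x; rewrite indicE /=.
by have [Px|Px] := boolP (P (phi x)); [rewrite mem_set | rewrite memNset //= (negbTE Px)].
Qed.

Definition is_argmax (t : theta) i k := [forall j, t i j <= t i k].

Lemma chooseE (t : theta) i : Defs.choose t i = odflt ord0 [pick k | is_argmax t i k].
Proof. by []. Qed.

(* The set of maximizers ranges over the finitely many subsets B of arms, and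
   [choose t i] only depends on that set. *)
Lemma theta_measurable_pred_choose i a : theta_measurable_pred (fun t => Defs.choose t i == a).
Proof.
apply: (@eq_theta_measurable_pred (fun t => [exists B : {set 'I_K.+1},
   (odflt ord0 [pick k in B] == a) && [forall k, is_argmax t i k == (k \in B)]])).
  move=> t; rewrite chooseE; apply/existsP/idP.
    case=> B /andP[/eqP <- /forallP HB]; apply/eqP; congr odflt.
    by apply: eq_pick => k /=; rewrite (eqP (HB k)).
  move=> /eqP <-; exists (finset (is_argmax t i)); apply/andP; split.
    by apply/eqP; congr odflt; apply: eq_pick => k /=; rewrite inE.
  by apply/forallP => k; rewrite inE.
apply: theta_measurable_pred_exists => B; apply: theta_measurable_predI.
  exact: theta_measurable_pred_cst.
apply: theta_measurable_pred_forall => k.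
have mk : theta_measurable_pred (fun t => is_argmax t i k).
  by apply: theta_measurable_pred_forall => j; apply: theta_measurable_ler;
    exact: theta_measurable_proj.
case: (k \in B).
  by apply: eq_theta_measurable_pred mk => t; rewrite eqb_id.
by apply: eq_theta_measurable_pred (theta_measurable_predN mk) => t; rewrite eqbF_neg.
Qed.

Lemma theta_measurable_choose (Psi : ('I_N -> 'I_K.+1) -> R) :
  theta_measurable (fun t => Psi (Defs.choose t)).
Proof.
apply: (@eq_theta_measurable (fun t => \sum_(A : {ffun 'I_N -> 'I_K.+1})
   Psi A * ([forall i, Defs.choose t i == A i])%:R)).
  move=> t; rewrite (bigD1 [ffun i => Defs.choose t i]) //= big1 ?addr0.
    rewrite (_ : [forall i, _]) ?mulr1; last by apply/forallP => i; rewrite ffunE.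
    by congr Psi; apply/funext => i; rewrite ffunE.
  move=> A /eqP AF; rewrite (_ : [forall i, _] = false) ?mulr0 //.
  by apply/negbTE/forallP => H; apply: AF; apply/ffunP => i; rewrite ffunE (eqP (H i)).
apply: theta_measurable_sum => A; apply: theta_measurableM; first exact: theta_measurable_cst.
apply: theta_measurable_nat; apply: theta_measurable_pred_forall => i.
exact: theta_measurable_pred_choose.
Qed.

End ThetaMeasurability.

Lemma measurable_Rintegral01_param (R : realType) d (X : measurableType d)
    (G : X -> R -> R) :
  measurable_fun setT (fun xz : X * R => G xz.1 xz.2) -> (forall x z, 0 <= G x z) ->
  measurable_fun setT (fun x => Rintegral lebesgue_measure `[0%R, 1%R] (G x)).
Proof.
move=> mG G0; pose f xz := (G xz.1 xz.2 * \1_(`[0%R, 1%R] : set R) xz.2)%:E.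
have -> : (fun x => Rintegral lebesgue_measure `[0%R, 1%R] (G x)) =
    fine \o fubini_F lebesgue_measure f.
  apply/funext => x; rewrite Rintegral_mkcond /Rintegral /fubini_F /f /=.
  congr fine; apply: eq_integral => z _; congr EFin.
  by rewrite /patch indicE; case: (z \in _); rewrite ?mulr1 ?mulr0.
apply: measurableT_comp (fine_measurable _) _ => //.
apply: measurable_fun_fubini_tonelli_F; last by move=> xz; rewrite lee_fin mulr_ge0.
apply/measurable_EFinP; apply: measurable_funM => //.
exact: measurableT_comp (measurable_indic _) measurable_snd.
Qed.

Section Draw.
Variables (R : realType) (N K : nat).
Notation theta := ('I_N -> 'I_K.+1 -> R).

Definition posterior_ge1 (st : state R N K) :=
  forall i k, 1 <= alpha_ st i k /\ 1 <= beta_ st i k.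

Definition tame (F : theta -> R) :=
  [/\ theta_measurable F, forall t, 0 <= F t & exists c, forall t, F t <= c].

Lemma eq_tame F G : (forall t, F t = G t) -> tame F -> tame G.
Proof. by move=> /funext <-. Qed.

Lemma tame_cst c : 0 <= c -> tame (fun _ => c).
Proof. by move=> c0; split => //; [exact: theta_measurable_cst | exists c]. Qed.

Lemma tameD F G : tame F -> tame G -> tame (fun t => F t + G t).
Proof.
case=> mF F0 [c Fc] [mG G0 [c' Gc]]; split; first exact: theta_measurableD.
  by move=> t; rewrite addr_ge0.
by exists (c + c') => t; rewrite lerD.
Qed.

Lemma tameM F G : tame F -> tame G -> tame (fun t => F t * G t).
Proof.
case=> mF F0 [c Fc] [mG G0 [c' Gc]]; split; first exact: theta_measurableM.
  by move=> t; rewrite mulr_ge0.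
by exists (c * c') => t; rewrite ler_pM.
Qed.

Lemma tame_sum (J : Type) (r : seq J) (F : J -> theta -> R) :
  (forall j, tame (F j)) -> tame (fun t => \sum_(j <- r) F j t).
Proof.
move=> tF; elim: r => [|j r IH].
  by apply: eq_tame (tame_cst (lexx 0)) => t; rewrite big_nil.
by apply: eq_tame (tameD (tF j) IH) => t; rewrite big_cons.
Qed.

Lemma tame_nat P : theta_measurable_pred P -> tame (fun t => (P t)%:R).
Proof.
move=> mP; split; first exact: theta_measurable_nat.
  by move=> t; exact: ler0n.
by exists 1 => t; case: (P t).
Qed.

Lemma tame_choose (Psi : ('I_N -> 'I_K.+1) -> R) : (forall A, 0 <= Psi A) ->
  tame (fun t : theta => Psi (Defs.choose t)).
Proof.
move=> Psi0; split => //; first exact: theta_measurable_choose.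
exists (\sum_(A : {ffun 'I_N -> 'I_K.+1}) Psi A) => t.
have -> : Defs.choose t = [ffun i => Defs.choose t i] by apply/funext => i; rewrite ffunE.
by rewrite (bigD1 [ffun i => Defs.choose t i]) //= lerDl sumr_ge0.
Qed.

Definition set_theta (t : theta) (p : 'I_N * 'I_K.+1) (x : R) : theta :=
  fun i k => if (i, k) == p then x else t i k.

Lemma set_thetaC t p q x z : p != q ->
  set_theta (set_theta t q x) p z = set_theta (set_theta t p z) q x.
Proof.
move=> pq; rewrite /set_theta funeq2E => i k.
by case: eqP => [->|//]; rewrite (negbTE pq).
Qed.

Lemma set_theta_eq t q x : set_theta t q x q.1 q.2 = x.
Proof. by rewrite /set_theta -surjective_pairing eqxx. Qed.

Lemma set_theta_neq t p q z : p != q -> set_theta t p z q.1 q.2 = t q.1 q.2.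
Proof. by move=> pq; rewrite /set_theta -surjective_pairing eq_sym (negbTE pq). Qed.

Lemma coordwise_measurable_set_theta d (X : measurableType d) (phi : X -> theta) p :
  coordwise_measurable phi ->
  coordwise_measurable (fun xz : X * R => set_theta (phi xz.1) p xz.2).
Proof.
move=> cphi i k; rewrite /set_theta; case: ((i, k) == p); first exact: measurable_snd.
exact: measurableT_comp (cphi i k) measurable_fst.
Qed.

Lemma measurable_set_theta F t p : tame F -> measurable_fun setT (fun x => F (set_theta t p x)).
Proof.
case=> mF _ _; apply: (mF _ _ (set_theta t p)) => i k.
by rewrite /set_theta; case: ((i, k) == p); [exact: measurable_id | exact: measurable_cst].
Qed.

Lemma bounded01_set_theta F t p : tame F -> bounded01 (fun x => F (set_theta t p x)).
Proof. by case=> _ F0 [c Fc]; exists c => z _; rewrite ger0_norm. Qed.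

Variable st : state R N K.
Hypothesis st_ge1 : posterior_ge1 st.

Definition coord_expect (p : 'I_N * 'I_K.+1) (h : R -> R) :=
  beta_expect (alpha_ st p.1 p.2) (beta_ st p.1 p.2) h.

Lemma draw_cons p s F t :
  draw (p :: s) st F t = coord_expect p (fun x => draw s st F (set_theta t p x)).
Proof. by []. Qed.

Section CoordExpectSet.
Variables (p : 'I_N * 'I_K.+1) (t : theta) (F G : theta -> R).
Hypotheses (tF : tame F) (tG : tame G).

Lemma coord_expect_setD : coord_expect p (fun x => F (set_theta t p x) + G (set_theta t p x)) =
  coord_expect p (fun x => F (set_theta t p x)) + coord_expect p (fun x => G (set_theta t p x)).
Proof.
have [a1 b1] := st_ge1 p.1 p.2.
exact (beta_expectD a1 b1 (measurable_set_theta t p tF) (bounded01_set_theta t p tF)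
  (measurable_set_theta t p tG) (bounded01_set_theta t p tG)).
Qed.

Lemma ler_coord_expect_set : (forall x, F (set_theta t p x) <= G (set_theta t p x)) ->
  coord_expect p (fun x => F (set_theta t p x)) <= coord_expect p (fun x => G (set_theta t p x)).
Proof.
have [a1 b1] := st_ge1 p.1 p.2; move=> FG.
exact (ler_beta_expect a1 b1 (measurable_set_theta t p tF) (bounded01_set_theta t p tF)
  (measurable_set_theta t p tG) (bounded01_set_theta t p tG) (fun x _ => FG x)).
Qed.

Lemma coord_expect_setZ c : coord_expect p (fun x => c * F (set_theta t p x)) =
  c * coord_expect p (fun x => F (set_theta t p x)).
Proof.
have [a1 b1] := st_ge1 p.1 p.2.
exact (beta_expectZ a1 b1 c (measurable_set_theta t p tF) (bounded01_set_theta t p tF)).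
Qed.

End CoordExpectSet.

Lemma tame_draw s F : tame F -> tame (draw s st F).
Proof.
move=> tF; elim: s => [|p s IH]; first exact: tF.
have [a1 b1] := st_ge1 p.1 p.2; split.
- move=> d X phi cphi; apply: measurable_Rintegral01_param.
    apply: measurable_funM; first exact: measurableT_comp (measurable_beta_pdf _ _) measurable_snd.
    by case: IH => mD _ _; exact: mD _ _ _ (coordwise_measurable_set_theta p cphi).
  by move=> x z; rewrite mulr_ge0 ?beta_pdf_ge0 //; case: IH.
- by move=> t; rewrite draw_cons; apply: beta_expect_ge0 => // z _; case: IH.
- case: (IH) => _ _ [c Dc]; exists c => t; rewrite draw_cons.
  rewrite -[leRHS](beta_expect_cst a1 b1 c).
  apply: (ler_beta_expect a1 b1 (measurable_set_theta _ _ IH) (bounded01_set_theta _ _ IH)).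
  - exact: measurable_cst.
  - by exists `|c|.
  - by [].
Qed.

Lemma eq_draw s F G t : (forall t, F t = G t) -> draw s st F t = draw s st G t.
Proof. by move=> /funext ->. Qed.

Lemma draw_cst s c t : draw s st (fun _ => c) t = c.
Proof.
elim: s t => [|p s IH] t //; have [a1 b1] := st_ge1 p.1 p.2.
rewrite draw_cons -[RHS](beta_expect_cst a1 b1 c).
by congr beta_expect; apply/funext => x; exact: IH.
Qed.

Lemma drawD s F G t : tame F -> tame G ->
  draw s st (fun t => F t + G t) t = draw s st F t + draw s st G t.
Proof.
move=> tF tG; elim: s t => [|p s IH] t //.
rewrite !draw_cons -(coord_expect_setD _ _ (tame_draw s tF) (tame_draw s tG)).
by congr coord_expect; apply/funext => x; exact: IH.
Qed.

Lemma drawZ s c F t : tame F -> draw s st (fun t => c * F t) t = c * draw s st F t.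
Proof.
move=> tF; elim: s t => [|p s IH] t //.
rewrite !draw_cons -(coord_expect_setZ _ _ (tame_draw s tF)).
by congr coord_expect; apply/funext => x; exact: IH.
Qed.

Lemma ler_draw s F G t : tame F -> tame G -> (forall t, F t <= G t) ->
  draw s st F t <= draw s st G t.
Proof.
move=> tF tG FG; elim: s t => [|p s IH] t; first exact: FG.
by rewrite !draw_cons; apply: ler_coord_expect_set (tame_draw s tF) (tame_draw s tG) _ => x.
Qed.

Lemma draw_sum (J : Type) (r : seq J) s (F : J -> theta -> R) t :
  (forall j, tame (F j)) ->
  draw s st (fun t => \sum_(j <- r) F j t) t = \sum_(j <- r) draw s st (F j) t.
Proof.
move=> tF; elim: r => [|j r IH].
  by rewrite big_nil -[RHS](draw_cst s 0 t); apply: eq_draw => u; rewrite big_nil.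
rewrite big_cons -IH -drawD //; last exact: tame_sum.
by apply: eq_draw => u; rewrite big_cons.
Qed.

Lemma draw_set_theta_id s F t q x : q \notin s ->
  (forall u z, F (set_theta u q z) = F u) ->
  draw s st F (set_theta t q x) = draw s st F t.
Proof.
move=> qs Fq; elim: s t qs => [|p s IH] t; first by move=> _; exact: Fq.
rewrite in_cons negb_or => /andP[qp qs]; rewrite !draw_cons.
by congr coord_expect; apply/funext => z; rewrite set_thetaC 1?eq_sym // IH.
Qed.

Lemma draw_mulr_coord_out s (h : R -> R) G q t : q \notin s -> tame G ->
  draw s st (fun u => h (u q.1 q.2) * G u) t = h (t q.1 q.2) * draw s st G t.
Proof.
move=> qs tG; elim: s t qs => [|p s IH] t //.
rewrite in_cons negb_or => /andP[qp qs].
rewrite !draw_cons -(coord_expect_setZ _ _ (tame_draw s tG)).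
by congr coord_expect; apply/funext => z; rewrite IH // set_theta_neq // eq_sym.
Qed.

(* Independence of the coordinates: a factor depending on the single
   coordinate q splits off as its own Beta expectation. *)
Lemma draw_mulr_coord s (h : R -> R) G q t : q \in s -> uniq s -> tame G ->
  (forall u z, G (set_theta u q z) = G u) -> measurable_fun setT h -> bounded01 h ->
  draw s st (fun u => h (u q.1 q.2) * G u) t = coord_expect q h * draw s st G t.
Proof.
move=> qs us tG Gq mh bh; elim: s t qs us => [|p s IH] t //.
rewrite in_cons draw_cons; have [<- _|pq /= qs] := eqVneq q p => /andP[ps us].
  have [a1 b1] := st_ge1 q.1 q.2.
  have -> : draw (q :: s) st G t = draw s st G t.
    rewrite draw_cons -[RHS](beta_expect_cst a1 b1) /coord_expect.
    by congr beta_expect; apply/funext => x; apply: draw_set_theta_id ps Gq.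
  rewrite mulrC -beta_expectZ //; congr beta_expect; apply/funext => z.
  by rewrite draw_mulr_coord_out // set_theta_eq (draw_set_theta_id _ _ ps Gq) mulrC.
rewrite -(coord_expect_setZ _ _ (tame_draw s tG)).
by congr coord_expect; apply/funext => z; rewrite IH.
Qed.

End Draw.

Section PathExpectation.
Variables (R : realType) (N K : nat).
Notation theta := ('I_N -> 'I_K.+1 -> R).
Notation actions := ('I_N -> 'I_K.+1).
Notation rewards := {ffun 'I_N -> bool}.
Variables (W : 'M[R]_N) (eta : R) (mu : 'I_K.+1 -> R).
Hypotheses (W_ge0 : forall i j, 0 <= W i j) (W_row1 : forall i, \sum_j W i j = 1).
Hypotheses (eta_gt0 : 0 < eta) (mu01 : forall j, 0 <= mu j <= 1).

Lemma posterior_ge1_init : posterior_ge1 (init_state R N K).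
Proof. by []. Qed.

Lemma posterior_ge1_update (st : state R N K) (A : actions) (Y : rewards) :
  posterior_ge1 st -> posterior_ge1 (update W eta st A Y).
Proof.
have convex_ge1 (f : 'I_N -> R) i : (forall j, 1 <= f j) -> 1 <= \sum_j W i j * f j.
  move=> f1; rewrite -(W_row1 i); apply: ler_sum => j _.
  exact: ler_peMr (W_ge0 i j) (f1 j).
move=> st_ge1 i k; split; apply: convex_ge1 => j; have [a1 b1] := st_ge1 j k.
  by rewrite ler_wpDr ?mulr_ge0 ?ler0n ?(ltW eta_gt0).
by rewrite ler_wpDr ?mulr_ge0 ?ler0n ?(ltW eta_gt0) // subr_ge0 lern1 leq_b1.
Qed.

Lemma rew_prob_ge0 (A : actions) (Y : rewards) : 0 <= rew_prob mu A Y.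
Proof.
apply: prodr_ge0 => i _; have /andP[m0 m1] := mu01 (A i).
by case: (Y i); rewrite ?subr_ge0.
Qed.

Lemma rew_prob_sum1 (A : actions) : \sum_(Y : rewards) rew_prob mu A Y = 1.
Proof.
rewrite /rew_prob -(bigA_distr_bigA (fun i (b : bool) => if b then mu (A i) else 1 - mu (A i))).
by apply: big1 => i _; rewrite big_bool /= addrC subrK.
Qed.

Lemma eq_pathE T st F G : (forall rs, F rs = G rs) ->
  pathE W eta mu T st F = pathE W eta mu T st G.
Proof. by move=> /funext ->. Qed.

Lemma pathE_exchange T st (f : 'I_N -> round R N K -> R) :
  pathE W eta mu T st (fun rs => \sum_(i < N) \sum_(r <- rs) f i r) =
  pathE W eta mu T st (fun rs => \sum_(r <- rs) \sum_(i < N) f i r).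
Proof. by apply: eq_pathE => rs; rewrite exchange_big. Qed.

Section RoundSum.
Variable w : state R N K -> theta -> actions -> R.
Hypothesis tame_w : forall st, posterior_ge1 st -> tame (fun t => w st t (Defs.choose t)).

Definition round_sum (rs : seq (round R N K)) :=
  \sum_(r <- rs) w (r_state r) (r_theta r) (r_act r).

Definition continuation_value T st (A : actions) :=
  \sum_(Y : rewards)
    rew_prob mu A Y * pathE W eta mu T (update W eta st A Y) round_sum.

Lemma tame_continuation_value T st : posterior_ge1 st ->
  (forall st', posterior_ge1 st' -> 0 <= pathE W eta mu T st' round_sum) ->
  tame (fun t => continuation_value T st (Defs.choose t)).
Proof.
move=> st_ge1 pathE_ge0; apply: tame_choose => A; apply: sumr_ge0 => Y _.
by rewrite mulr_ge0 ?rew_prob_ge0 //; apply/pathE_ge0/posterior_ge1_update.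
Qed.

Lemma pathE_round_sum_succ T st c : 0 <= c -> posterior_ge1 st ->
  (forall st', posterior_ge1 st' -> forall c, 0 <= c ->
     pathE W eta mu T st' (fun rs => c + round_sum rs) = c + pathE W eta mu T st' round_sum) ->
  pathE W eta mu T.+1 st (fun rs => c + round_sum rs) =
  draw_all st (fun t => c + w st t (Defs.choose t) + continuation_value T st (Defs.choose t)).
Proof.
move=> c0 st_ge1 pathE_addl; have [_ w_ge0 _] := tame_w st_ge1.
rewrite [LHS]/= /draw_all; apply: eq_draw => t; set A := Defs.choose t.
transitivity (\sum_(Y : rewards) rew_prob mu A Y *
   (c + w st t A + pathE W eta mu T (update W eta st A Y) round_sum)).
  apply: eq_bigr => Y _; congr (_ * _).
  rewrite -pathE_addl ?addr_ge0 ?w_ge0 //; last exact: posterior_ge1_update.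
  by apply: eq_pathE => rs; rewrite /round_sum big_cons addrA.
under eq_bigr do rewrite mulrDr.
by rewrite big_split /= -big_distrl /= rew_prob_sum1 mul1r.
Qed.

Lemma pathE_round_sum_shift_ge0 T st : posterior_ge1 st ->
  (forall c, 0 <= c ->
     pathE W eta mu T st (fun rs => c + round_sum rs) = c + pathE W eta mu T st round_sum)
  /\ 0 <= pathE W eta mu T st round_sum.
Proof.
elim: T st => [|T IH] st st_ge1.
  by split => [c _|] /=; rewrite /round_sum big_nil ?addr0.
have pathE_ge0 st' : posterior_ge1 st' -> 0 <= pathE W eta mu T st' round_sum.
  by case/IH.
pose step t := w st t (Defs.choose t) + continuation_value T st (Defs.choose t).
have tame_step : tame step.
  exact: tameD (tame_w st_ge1) (tame_continuation_value st_ge1 pathE_ge0).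
have shift c : 0 <= c ->
    pathE W eta mu T.+1 st (fun rs => c + round_sum rs) = c + draw_all st step.
  move=> c0; rewrite pathE_round_sum_succ //; last by move=> st' /IH[].
  transitivity (draw_all st (fun t => c + step t)); first by apply: eq_draw => t; rewrite addrA.
  by rewrite /draw_all drawD ?draw_cst //; exact: tame_cst.
have -> : pathE W eta mu T.+1 st round_sum = draw_all st step.
  by rewrite -[RHS]add0r -shift //; apply: eq_pathE => rs; rewrite add0r.
split => [c c0|]; first exact: shift.
by have [_ + _] := tame_draw st_ge1 (enum {: 'I_N * 'I_K.+1}) tame_step; apply.
Qed.

Lemma pathE_round_sum_step T st : posterior_ge1 st ->
  pathE W eta mu T.+1 st round_sum =
  draw_all st (fun t => w st t (Defs.choose t) + continuation_value T st (Defs.choose t)).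
Proof.
move=> st_ge1; rewrite -(eq_pathE T.+1 st (fun rs => add0r (round_sum rs))).
rewrite pathE_round_sum_succ //; last by move=> st' /(pathE_round_sum_shift_ge0 T)[].
by apply: eq_draw => t; rewrite add0r.
Qed.

End RoundSum.

Lemma ler_pathE_round_sum (wL wR : state R N K -> theta -> actions -> R) :
  (forall st, posterior_ge1 st -> tame (fun t => wL st t (Defs.choose t))) ->
  (forall st, posterior_ge1 st -> tame (fun t => wR st t (Defs.choose t))) ->
  (forall st, posterior_ge1 st -> draw_all st (fun t => wL st t (Defs.choose t)) <=
                                  draw_all st (fun t => wR st t (Defs.choose t))) ->
  forall T st, posterior_ge1 st ->
  pathE W eta mu T st (round_sum wL) <= pathE W eta mu T st (round_sum wR).
Proof.
move=> tL tR round_le; elim=> [|T IH] st st_ge1; first by rewrite /= /round_sum !big_nil.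
have tame_cont w : (forall st, posterior_ge1 st -> tame (fun t => w st t (Defs.choose t))) ->
    tame (fun t => continuation_value w T st (Defs.choose t)).
  move=> tw; apply: tame_continuation_value => // st' h.
  exact: (pathE_round_sum_shift_ge0 tw T h).2.
have [tLs tRs] := (tL st st_ge1, tR st st_ge1).
have [cL cR] := (tame_cont wL tL, tame_cont wR tR).
rewrite !pathE_round_sum_step // /draw_all !drawD //.
apply: lerD; first exact: round_le.
apply: ler_draw => // t; apply: ler_sum => Y _; apply: ler_wpM2l; first exact: rew_prob_ge0.
exact/IH/posterior_ge1_update.
Qed.

End PathExpectation.

Lemma le_choose (R : realType) (N K : nat) (t : 'I_N -> 'I_K.+1 -> R) i j :
  t i j <= t i (Defs.choose t i).
Proof. by rewrite /Defs.choose; case: arg_maxP => //= m _; apply. Qed.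

Section AgentRound.
Variables (R : realType) (N K : nat).
Notation theta := ('I_N -> 'I_K.+1 -> R).
Variables (st : state R N K) (i : 'I_N) (y : R).
Hypotheses (st_ge1 : posterior_ge1 st) (y_ge0 : 0 <= y) (y_lt1 : y < 1).

Definition others_le (t : theta) := [forall j, (j != ord0) ==> (t i j <= y)].

Lemma tame_others_le : tame (fun t => (others_le t)%:R).
Proof.
apply/tame_nat/theta_measurable_pred_forall => j; case: (j != ord0) => /=.
  by apply: theta_measurable_ler; [exact: theta_measurable_proj | exact: theta_measurable_cst].
exact: theta_measurable_pred_cst.
Qed.

Lemma others_le_set_ord0 t z : others_le (set_theta t (i, ord0) z) = others_le t.
Proof.
apply: eq_forallb => j; case: eqP => //= /eqP j0.
by rewrite /set_theta xpair_eqE eqxx (negbTE j0).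
Qed.

Lemma draw_all_mulr_others (h : R -> R) : measurable_fun setT h -> bounded01 h ->
  draw_all st (fun t => h (t i ord0) * (others_le t)%:R) =
  coord_expect st (i, ord0) h * draw_all st (fun t => (others_le t)%:R).
Proof.
move=> mh bh; apply: (@draw_mulr_coord _ _ _ _ st_ge1 _ _ _ (i, ord0)) => //.
- by rewrite mem_enum.
- exact: enum_uniq.
- exact: tame_others_le.
- by move=> u z; rewrite others_le_set_ord0.
Qed.

Lemma G1_coord_expect : G1 st i y = coord_expect st (i, ord0) (fun z => (y < z)%R%:R).
Proof. exact: beta_prob_itv_gt. Qed.

Lemma coord_expect_ler_ord0 :
  coord_expect st (i, ord0) (fun z => (z <= y)%R%:R) = 1 - G1 st i y.
Proof. by have [a1 b1] := st_ge1 i ord0; exact: beta_expect_ler_nat. Qed.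

Lemma G1_gt0 : 0 < G1 st i y.
Proof. by have [a1 b1] := st_ge1 i ord0; apply: beta_prob_itv_gt_gt0 => //; apply/andP. Qed.

Lemma G1_inv_sub1_ge0 : 0 <= (G1 st i y)^-1 - 1.
Proof.
have [a1 b1] := st_ge1 i ord0.
by rewrite subr_ge0 invf_ge1 ?G1_gt0 // beta_prob_itv_gt_le1.
Qed.

Lemma tame_choose_sample (k : 'I_K.+1) (b : bool) :
  tame (fun t : theta => ((Defs.choose t i == k) && b && (t i k <= y))%:R).
Proof.
apply/tame_nat/theta_measurable_predI; last first.
  by apply: theta_measurable_ler; [exact: theta_measurable_proj | exact: theta_measurable_cst].
exact/theta_measurable_predI/theta_measurable_pred_cst/theta_measurable_pred_choose.
Qed.

Lemma tame_G1_weight :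
  tame (fun t : theta => ((G1 st i y)^-1 - 1) * (Defs.choose t i == ord0)%:R).
Proof.
apply: tameM; first exact/tame_cst/G1_inv_sub1_ge0.
exact/tame_nat/theta_measurable_pred_choose.
Qed.

(* The chosen arm is maximal, so if it is k with a sample below y then every
   sample of agent i, in particular that of arm 1, is below y. *)
Lemma draw_all_choose_sample_le (k : 'I_K.+1) (b : bool) :
  draw_all st (fun t => ((Defs.choose t i == k) && b && (t i k <= y))%:R)
  <= (1 - G1 st i y) * draw_all st (fun t => (others_le t)%:R).
Proof.
rewrite -coord_expect_ler_ord0 -draw_all_mulr_others;
  [|exact: measurable_ler_nat | exact: bounded01_nat].
apply: (ler_draw st_ge1).
- exact: tame_choose_sample.
- apply: tameM tame_others_le; apply: tame_nat.
  by apply: theta_measurable_ler; [exact: theta_measurable_proj | exact: theta_measurable_cst].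
move=> t; have [/andP[/andP[/eqP ck _] tk]|_] := boolP (_ && _ && _); last first.
  by rewrite mulr_ge0 ?ler0n.
have t_le j : t i j <= y by rewrite (le_trans (le_choose t i j)) // ck.
have -> : others_le t by apply/forallP => j; apply/implyP => _; exact: t_le.
by rewrite t_le mul1r.
Qed.

Lemma draw_all_choose_ord0_ge :
  G1 st i y * draw_all st (fun t => (others_le t)%:R)
  <= draw_all st (fun t => (Defs.choose t i == ord0)%:R).
Proof.
rewrite G1_coord_expect -draw_all_mulr_others;
  [|exact: measurable_ltr_nat | exact: bounded01_nat].
apply: (ler_draw st_ge1).
- apply: tameM tame_others_le; apply: tame_nat.
  by apply: theta_measurable_ltr; [exact: theta_measurable_cst | exact: theta_measurable_proj].
- exact/tame_nat/theta_measurable_pred_choose.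
move=> t; have [yt|] := boolP (y < t i ord0); last by rewrite mul0r ler0n.
have [others|] := boolP (others_le t); last by rewrite mulr0 ler0n.
rewrite mulr1; suff -> : Defs.choose t i == ord0 by [].
apply/negPn/negP => c0; have := le_trans (le_choose t i ord0) (implyP (forallP others _) c0).
by rewrite leNgt yt.
Qed.

Lemma draw_all_choose_sample_le_G1_weight (k : 'I_K.+1) (b : bool) :
  draw_all st (fun t => ((Defs.choose t i == k) && b && (t i k <= y))%:R)
  <= draw_all st (fun t => ((G1 st i y)^-1 - 1) * (Defs.choose t i == ord0)%:R).
Proof.
have G0 := G1_gt0; rewrite /draw_all (drawZ st_ge1) -/(draw_all _ _); last first.
  exact/tame_nat/theta_measurable_pred_choose.
apply: le_trans; first exact: draw_all_choose_sample_le k b.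
have -> : 1 - G1 st i y = ((G1 st i y)^-1 - 1) * G1 st i y.
  by rewrite mulrBl mulVf ?gt_eqF // mul1r.
by rewrite -mulrA ler_wpM2l ?G1_inv_sub1_ge0 ?draw_all_choose_ord0_ge.
Qed.

End AgentRound.

Section Weights.
Variables (R : realType) (N K : nat) (k : 'I_K.+1) (x y : R).
Notation theta := ('I_N -> 'I_K.+1 -> R).
Hypotheses (y_ge0 : 0 <= y) (y_lt1 : y < 1).

Definition suboptimal_weight (st : state R N K) (t : theta) (A : 'I_N -> 'I_K.+1) : R :=
  \sum_(i < N) ((A i == k) && (muhat st i k <= x) && (t i k <= y))%:R.

Definition optimal_weight (st : state R N K) (t : theta) (A : 'I_N -> 'I_K.+1) : R :=
  \sum_(i < N) ((G1 st i y)^-1 - 1) * (A i == ord0)%:R.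

Lemma draw_all_suboptimal_le_optimal (st : state R N K) : posterior_ge1 st ->
  draw_all st (fun t => suboptimal_weight st t (Defs.choose t)) <=
  draw_all st (fun t => optimal_weight st t (Defs.choose t)).
Proof.
move=> st_ge1; rewrite /draw_all (draw_sum st_ge1 _ _ _ (fun i => tame_choose_sample i y k _)).
rewrite (draw_sum st_ge1 _ _ _ (fun i => tame_G1_weight i st_ge1 y_ge0 y_lt1)).
by apply: ler_sum => i _; exact: draw_all_choose_sample_le_G1_weight.
Qed.

End Weights.

Unset Implicit Arguments.

Theorem lemma5 (R : realType) (N K : nat) (e : rel 'I_N) (W : 'M[R]_N)
  (mu : 'I_K.+1 -> R) (eta : R) (k : 'I_K.+1) (x y : R) (T : nat) :
  gossip_matrix e W ->
  (forall j, 0 <= mu j <= 1) ->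
  (forall j, j != ord0 -> mu j < mu ord0) ->
  (forall i j : 'I_K.+1, (0 < i)%N -> (i <= j)%N -> mu j <= mu i) ->
  0 < eta ->
  k != ord0 ->
  mu k < x -> x < y -> y < mu ord0 ->
  (1 <= T)%N ->
  pathE W eta mu T (init_state R N K)
    (fun rs => \sum_(i < N) \sum_(r <- rs)
       ((r_act r i == k) && (muhat (r_state r) i k <= x)
        && (r_theta r i k <= y))%:R)
  <=
  pathE W eta mu T (init_state R N K)
    (fun rs => \sum_(i < N) \sum_(r <- rs)
       ((G1 (r_state r) i y)^-1 - 1) * (r_act r i == ord0)%:R).
Proof.
move=> [_ [W_ge0 W_row1 _ _]] mu01 _ _ eta_gt0 _ muk_lt_x x_lt_y y_lt_mu1 _.
have y_ge0 : 0 <= y by have /andP[muk_ge0 _] := mu01 k; lra.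
have y_lt1 : y < 1 by have /andP[_ mu1_le1] := mu01 ord0; lra.
rewrite !pathE_exchange.
apply: (ler_pathE_round_sum W_ge0 W_row1 eta_gt0 mu01
  (wL := suboptimal_weight k x y) (wR := optimal_weight y)).
- by move=> st _; apply: tame_sum => i; exact: tame_choose_sample.
- by move=> st st_ge1; apply: tame_sum => i; exact: tame_G1_weight.
- by move=> st; exact: draw_all_suboptimal_le_optimal.
- exact: posterior_ge1_init.
Qed.
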